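(* There is an evolutionary graph that is not isothermal but for which, for every $r>1$, the fixation probability of the weighted Moran process with fitness $r$ started from a single uniformly random initial mutant equals $\rho_{\mathrm{reg}}(r,n)=\frac{1-1/r}{1-1/r^n}$, where $n$ is the number of vertices.
   Context: An evolutionary graph is a finite vertex set $V$ together with weights $w_{uv}\ge 0$ for ordered pairs $(u,v)$ (with $w_{uv}=0$ when there is no edge $(u,v)$) such that $\sum_{v\in V}w_{uv}=1$ for every $u\in V$. The weighted Moran process with fitness $r$: initially one vertex is a mutant and the others are non-mutants; at each step a vertex $u$ is chosen with probability proportional to its fitness (mutants $r$, non-mutants $1$), then a vertex $v$ is chosen with probability $w_{uv}$, and the state of $u$ is copied to $v$. Fixation is the event that eventually all vertices are mutants. The evolutionary graph is isothermal if $\sum_{v\in V}w_{vu}=1$ for every $u\in V$. *)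

From HB Require Import structures.
From mathcomp Require Import all_boot all_order all_algebra.
From mathcomp Require Import all_classical all_reals.
From mathcomp Require Import topology normedtype sequences.
Set Implicit Arguments.
Unset Strict Implicit.
Unset Printing Implicit Defensive.
Import Order.TTheory GRing.Theory Num.Theory.
Local Open Scope ring_scope.

Section Moran.
Context {R : realType} {V : finType}.

Definition evolutionary_graph (w : V -> V -> R) : Prop :=
  (forall u v, 0 <= w u v) /\ (forall u, \sum_(v : V) w u v = 1).

Definition isothermal (w : V -> V -> R) : Prop :=
  forall u, \sum_(v : V) w v u = 1.

(* fitness of vertex u in state S (S = set of mutants) *)
Definition fitness (r : R) (S : {set V}) (u : V) : R :=
  if u \in S then r else 1.

Definition total_fitness (r : R) (S : {set V}) : R :=
  \sum_(u : V) fitness r S u.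

Definition moran_next (S : {set V}) (u v : V) : {set V} :=
  if u \in S then v |: S else S :\ v.

Definition moran_step (r : R) (w : V -> V -> R) (S T : {set V}) : R :=
  \sum_(u : V) \sum_(v : V)
     (if moran_next S u v == T then fitness r S u / total_fitness r S * w u v
      else 0).

Fixpoint moran_dist (r : R) (w : V -> V -> R) (x : V) (t : nat)
  : {set V} -> R :=
  match t with
  | 0 => fun T => (T == [set x])%:R
  | t'.+1 => fun T => \sum_(S : {set V}) moran_dist r w x t' S * moran_step r w S T
  end.

Definition fixation_by (r : R) (w : V -> V -> R) (t : nat) : R :=
  (#|V|%:R)^-1 * \sum_(x : V) moran_dist r w x t [set: V].

End Moran.

Definition rho_reg {R : realType} (r : R) (n : nat) : R :=
  (1 - r^-1) / (1 - r^-1 ^+ n).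

(** The probability h S of fixation from a mutant set S is harmonic for the
    one-step transition kernel, equals 1 at the full set and 0 at the empty
    set.  Harmonicity makes the expectation of h constant along the process,
    and on the graph below every transient state is absorbed in one step with
    probability at least 1/(8(r+2)), so the mass left on transient states
    decays geometrically and the probability of fixation by time t converges
    to h {x}.  For the three-vertex graph in which vertex 0 spreads evenly to
    1 and 2, while 1 and 2 send 3/4 to 0, the harmonic equations can be solved
    in closed form and the average of h over the singletons is exactly
    rho_reg r 3, although the column of vertex 0 sums to 3/2. *)
From HB Require Import structures.
From mathcomp Require Import all_boot all_order all_algebra.
From mathcomp Require Import all_classical all_reals.
From mathcomp Require Import topology normedtype sequences.
From mathcomp Require Import ring lra.
Import Order.TTheory GRing.Theory Num.Theory numFieldNormedType.Exports.
Set Implicit Arguments.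
Unset Strict Implicit.
Local Open Scope classical_set_scope.
Local Open Scope set_scope.
Local Open Scope ring_scope.

Section MoranExpectation.
Variables (R : realType) (V : finType) (r : R) (w : V -> V -> R).

Lemma moran_step_expectE (S : {set V}) (g : {set V} -> R) :
  \sum_T moran_step r w S T * g T =
  \sum_u \sum_v fitness r S u / total_fitness r S * w u v * g (moran_next S u v).
Proof.
rewrite /moran_step.
under eq_bigr => T _ do rewrite big_distrl /=.
rewrite exchange_big /=; apply: eq_bigr => u _.
under eq_bigr => T _ do rewrite big_distrl /=.
rewrite exchange_big /=; apply: eq_bigr => v _.
rewrite (bigD1 (moran_next S u v)) //= eqxx big1 ?addr0 // => T /negbTE.
by rewrite eq_sym => ->; rewrite mul0r.
Qed.

Lemma in_moran_next (S : {set V}) (u v i : V) :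
  (i \in moran_next S u v) =
  if u \in S then (i == v) || (i \in S) else (i != v) && (i \in S).
Proof. by rewrite /moran_next; case: ifP; rewrite !inE. Qed.

Lemma moran_dist_expectS (x : V) (t : nat) (g : {set V} -> R) :
  \sum_T moran_dist r w x t.+1 T * g T =
  \sum_S moran_dist r w x t S * \sum_T moran_step r w S T * g T.
Proof.
under eq_bigr => T _ do rewrite /= big_distrl /=.
rewrite exchange_big /=; apply: eq_bigr => S _.
by rewrite big_distrr; apply: eq_bigr => T _ /=; rewrite mulrA.
Qed.

Lemma moran_dist_expect0 (x : V) (g : {set V} -> R) :
  \sum_T moran_dist r w x 0 T * g T = g [set x].
Proof.
rewrite (bigD1 [set x]) //= eqxx mul1r big1 ?addr0 // => T /negbTE ->.
by rewrite mul0r.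
Qed.

Lemma moran_dist_expect_harmonic (x : V) (h : {set V} -> R) :
  (forall S, \sum_T moran_step r w S T * h T = h S) ->
  forall t, \sum_T moran_dist r w x t T * h T = h [set x].
Proof.
move=> h_harm; elim=> [|t IHt]; first exact: moran_dist_expect0.
by rewrite moran_dist_expectS -IHt; apply: eq_bigr => S _; rewrite h_harm.
Qed.

Hypotheses (r_ge0 : 0 <= r) (w_ge0 : forall u v, 0 <= w u v).

Lemma moran_step_ge0 (S T : {set V}) : 0 <= moran_step r w S T.
Proof.
have fit_ge0 u : 0 <= fitness r S u by rewrite /fitness; case: ifP.
apply: sumr_ge0 => u _; apply: sumr_ge0 => v _; case: ifP => // _.
by rewrite mulr_ge0 ?divr_ge0 ?sumr_ge0.
Qed.

Lemma moran_dist_ge0 (x : V) (t : nat) (T : {set V}) : 0 <= moran_dist r w x t T.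
Proof.
elim: t T => [|t IHt] T /=; first by rewrite ler0n.
by apply: sumr_ge0 => S _; rewrite mulr_ge0 ?moran_step_ge0.
Qed.

Lemma moran_dist_expect_contract (x : V) (g : {set V} -> R) (c : R) :
  0 <= c -> (forall S, \sum_T moran_step r w S T * g T <= c * g S) ->
  forall t, \sum_T moran_dist r w x t T * g T <= c ^+ t * g [set x].
Proof.
move=> c_ge0 g_contr; elim=> [|t IHt]; first by rewrite moran_dist_expect0 expr0 mul1r.
rewrite moran_dist_expectS exprS -mulrA (le_trans _ (ler_wpM2l c_ge0 IHt)) //.
rewrite big_distrr; apply: ler_sum => S _ /=.
by rewrite mulrCA ler_wpM2l ?moran_dist_ge0.
Qed.

Definition transient (S : {set V}) : R := ((S != finset.set0) && (S != [set: V]))%:R.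

Lemma transient_ge0 (S : {set V}) : 0 <= transient S.
Proof. exact: ler0n. Qed.

Lemma transient_le1 (S : {set V}) : transient S <= 1.
Proof. by rewrite /transient; case: (_ && _); rewrite ?ler01. Qed.

Section Absorption.
Variables (h : {set V} -> R) (c : R).
Hypotheses (h_harm : forall S, \sum_T moran_step r w S T * h T = h S)
  (h_ge0 : forall S, 0 <= h S) (h_le1 : forall S, h S <= 1)
  (h_setT : h [set: V] = 1) (h_set0 : h finset.set0 = 0)
  (c_ge0 : 0 <= c) (c_lt1 : c < 1)
  (transient_contr : forall S,
     \sum_T moran_step r w S T * transient T <= c * transient S).

Lemma absorbed_decomposition (T : {set V}) :
  h T = (T == [set: V])%:R + transient T * h T.
Proof.
rewrite /transient; have [->|_] := eqVneq T finset.set0.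
  by rewrite h_set0 mulr0 addr0; case: eqP => // E; rewrite -h_set0 E h_setT.
by have [->|] := eqVneq T [set: V]; rewrite ?h_setT /= ?mul0r ?mul1r ?add0r ?addr0.
Qed.

Lemma moran_dist_setT_bounds (x : V) (t : nat) :
  h [set x] - c ^+ t <= moran_dist r w x t [set: V] <= h [set x].
Proof.
have := @moran_dist_expect_harmonic x h h_harm t.
under eq_bigr => T _ do rewrite absorbed_decomposition mulrDr.
rewrite big_split /= (bigD1 [set: V]) //= eqxx mulr1 big1 ?addr0; last first.
  by move=> T /negbTE ->; rewrite mulr0.
set E := \sum__ _ => hx.
have E_ge0 : 0 <= E.
  by apply: sumr_ge0 => T _; rewrite !mulr_ge0 ?moran_dist_ge0 ?transient_ge0.
have E_le : E <= c ^+ t.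
  apply: (@le_trans _ _ (\sum_T moran_dist r w x t T * transient T)).
    apply: ler_sum => T _; rewrite ler_wpM2l ?moran_dist_ge0 //.
    by rewrite -[X in _ <= X]mulr1 ler_wpM2l ?transient_ge0.
  apply: le_trans (@moran_dist_expect_contract x transient c c_ge0 transient_contr t) _.
  by rewrite -[X in _ <= X]mulr1 ler_wpM2l ?exprn_ge0 ?transient_le1.
by rewrite -hx; apply/andP; split; lra.
Qed.

Lemma moran_dist_setT_cvg (x : V) :
  moran_dist r w x t [set: V] @[t --> \oo] --> h [set x].
Proof.
apply: (@squeeze_cvgr _ _ _ _ (fun t => h [set x] - c ^+ t) (cst (h [set x]))).
- by apply: nearW => t; exact: moran_dist_setT_bounds.
- rewrite -[X in _ --> X]subr0; apply: cvgB; first exact: cvg_cst.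
  by apply: cvg_expr; rewrite ger0_norm.
- exact: cvg_cst.
Qed.

Lemma fixation_by_cvg :
  fixation_by r w t @[t --> \oo] --> (#|V|%:R)^-1 * \sum_x h [set x].
Proof.
apply: cvgMl_tmp; apply: cvg_big => [|x _]; last exact: moran_dist_setT_cvg.
exact: add_continuous.
Qed.

End Absorption.
End MoranExpectation.

Arguments transient {R V} S.

Section Example.
Variables (R : realType) (r : R).

Let v0 : 'I_3 := @Ordinal 3 0 isT.
Let v1 : 'I_3 := @Ordinal 3 1 isT.
Let v2 : 'I_3 := @Ordinal 3 2 isT.

Lemma ord3_cases (P : 'I_3 -> Prop) : P v0 -> P v1 -> P v2 -> forall i, P i.
Proof.
move=> P0 P1 P2 [[|[|[|k]]] lt_i3] //.
- by rewrite (_ : Ordinal _ = v0) //; apply: val_inj.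
- by rewrite (_ : Ordinal _ = v1) //; apply: val_inj.
- by rewrite (_ : Ordinal _ = v2) //; apply: val_inj.
Qed.

Let ord3_eqE : ((v0 == v1) = false) * ((v0 == v2) = false) * ((v1 == v0) = false)
             * ((v1 == v2) = false) * ((v2 == v0) = false) * ((v2 == v1) = false).
Proof. by []. Qed.

Lemma sum_ord3 (F : 'I_3 -> R) : \sum_(i < 3) F i = F v0 + F v1 + F v2.
Proof.
rewrite (big_ord_recl 2) (big_ord_recl 1) (big_ord_recl 0) big_ord0 addr0 addrA.
by congr (_ + _ + _); congr F; apply: val_inj.
Qed.

Lemma setT_ord3 (S : {set 'I_3}) : (S == [set: 'I_3]) = [&& v0 \in S, v1 \in S & v2 \in S].
Proof.
apply/eqP/and3P => [->|[S0 S1 S2]]; first by rewrite !inE.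
by apply/setP; apply: ord3_cases; rewrite inE.
Qed.

Lemma set0_ord3 (S : {set 'I_3}) :
  (S == finset.set0) = [&& v0 \notin S, v1 \notin S & v2 \notin S].
Proof.
apply/eqP/and3P => [->|[S0 S1 S2]]; first by rewrite !inE.
by apply/setP; apply: ord3_cases; rewrite inE; apply/negbTE.
Qed.

Definition example_weight (u v : 'I_3) : R :=
  if u == v then 0 else if u == v0 then 1/2 else if v == v0 then 3/4 else 1/4.

Lemma example_evolutionary_graph : evolutionary_graph example_weight.
Proof.
split=> [u v|]; rewrite /example_weight.
  by repeat case: ifP => _; lra.
by apply: ord3_cases; rewrite sum_ord3 !eqxx !ord3_eqE; lra.
Qed.

Lemma example_not_isothermal : ~ isothermal example_weight.
Proof. by move/(_ v0); rewrite sum_ord3 /example_weight !eqxx !ord3_eqE; lra. Qed.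

Let D : R := 4 * (r + 1) * (r ^+ 2 + r + 1).

Let D_gt0 : 1 < r -> 0 < D.
Proof. by move=> r_gt1; rewrite /D; apply: mulr_gt0; [apply: mulr_gt0|]; nra. Qed.

Definition example_fixation (S : {set 'I_3}) : R :=
  match v0 \in S, v1 \in S, v2 \in S with
  | true, true, true => 1
  | false, false, false => 0
  | true, false, false => 2 * r ^+ 2 * (2 * r + 1) / D
  | false, true, false | false, false, true => r ^+ 2 * (4 * r + 5) / D
  | true, true, false | true, false, true => r * (2 * r + 1) * (2 * r + 3) / D
  | false, true, true => 2 * r * (2 * r ^+ 2 + 4 * r + 3) / D
  end.

Lemma example_fixation_harmonic (S : {set 'I_3}) : 1 < r ->
  \sum_T moran_step r example_weight S T * example_fixation T = example_fixation S.
Proof.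
move=> r_gt1; have D_neq0 := lt0r_neq0 (D_gt0 r_gt1).
rewrite moran_step_expectE /total_fitness !sum_ord3 /example_fixation.
rewrite !in_moran_next !eqxx !ord3_eqE /fitness /example_weight !eqxx !ord3_eqE.
rewrite /D in D_neq0 *.
case: (v0 \in S); case: (v1 \in S); case: (v2 \in S) => /=.
all: field.
all: try done.
all: by repeat (apply/andP; split); apply: lt0r_neq0; nra.
Qed.

Lemma example_fixation_bounds (S : {set 'I_3}) : 1 < r -> 0 <= example_fixation S <= 1.
Proof.
move=> r_gt1; have D_pos := D_gt0 r_gt1.
rewrite /example_fixation; case: (v0 \in S); case: (v1 \in S); case: (v2 \in S).
all: rewrite /= ?ler01 ?lexx //.
all: by rewrite divr_ge0 ?ler_pdivrMr /= ?mul1r; rewrite /D; nra.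
Qed.

Lemma example_fixation_mean : 1 < r ->
  (#|'I_3|%:R)^-1 * \sum_x example_fixation [set x] = rho_reg r #|'I_3|.
Proof.
move=> r_gt1; have D_neq0 := lt0r_neq0 (D_gt0 r_gt1).
rewrite card_ord sum_ord3 /example_fixation !inE !eqxx !ord3_eqE /rho_reg /= /D.
rewrite /D in D_neq0; field.
by repeat (apply/andP; split); apply: lt0r_neq0; nra.
Qed.

Lemma transient_ord3 (S : {set 'I_3}) : transient S =
  if [&& v0 \in S, v1 \in S & v2 \in S] || [&& v0 \notin S, v1 \notin S & v2 \notin S]
  then 0 else 1 :> R.
Proof. by rewrite /transient set0_ord3 setT_ord3; do 3 case: (_ \in S). Qed.

Definition example_rate : R := 1 - (8 * (r + 2))^-1.

(* The total fitness is at most 4 (r + 2), so from every transient state some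
   transition of probability at least 1/(8 (r + 2)) leads to absorption. *)
Lemma example_transient_contract (S : {set 'I_3}) : 1 < r ->
  \sum_T moran_step r example_weight S T * transient T <= example_rate * transient S.
Proof.
move=> r_gt1; rewrite moran_step_expectE /total_fitness !sum_ord3 /example_rate.
have fit_bounds u : 1 <= fitness r S u <= r by rewrite /fitness; case: ifP; lra.
have /andP[f0_ge1 f0_ler] := fit_bounds v0.
have /andP[f1_ge1 f1_ler] := fit_bounds v1.
have /andP[f2_ge1 f2_ler] := fit_bounds v2.
set F := fitness r S v0 + fitness r S v1 + fitness r S v2.
have F_gt0 : 0 < F by rewrite /F; lra.
have invF_ge : 2 * (8 * (r + 2))^-1 <= F^-1.
  rewrite (_ : 2 * _ = (4 * (r + 2))^-1); last by field; lra.
  by rewrite lef_pV2 ?posrE /F; lra.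
have z_ge0 : 0 <= (8 * (r + 2))^-1 by rewrite invr_ge0; lra.
have invF_ge0 : 0 <= F^-1 by rewrite invr_ge0; lra.
have invFF : F^-1 * F = 1 by rewrite mulVf // gt_eqF.
move: invF_ge z_ge0 invF_ge0 invFF; rewrite /F.
move: (8 * (r + 2))^-1 => z; move: (_ + _ + _)^-1 => y.
rewrite !transient_ord3 !in_moran_next !eqxx !ord3_eqE /fitness /example_weight !eqxx !ord3_eqE.
by case: (v0 \in S); case: (v1 \in S); case: (v2 \in S) => /= *; nra.
Qed.

Lemma example_rate_ge0 : 1 < r -> 0 <= example_rate.
Proof. by move=> r_gt1; rewrite /example_rate subr_ge0 invf_le1; lra. Qed.

Lemma example_rate_lt1 : 1 < r -> example_rate < 1.
Proof. by move=> r_gt1; rewrite /example_rate ltrBlDr ltrDl invr_gt0; lra. Qed.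

End Example.

Theorem proposition1p12 (R : realType) :
  exists (V : finType) (w : V -> V -> R),
    evolutionary_graph w /\ ~ isothermal w /\
    forall r : R, 1 < r ->
      fixation_by r w t @[t --> \oo] --> rho_reg r #|V|.
Proof.
have ex_graph := example_evolutionary_graph R; have [w_ge0 _] := ex_graph.
exists 'I_3, (example_weight R); split; first exact: ex_graph.
split; first exact: example_not_isothermal.
move=> r r_gt1; rewrite -example_fixation_mean //.
have r_ge0 : 0 <= r by lra.
have h_harm S := example_fixation_harmonic S r_gt1.
have h_ge0 S := proj1 (andP (example_fixation_bounds S r_gt1)).
have h_le1 S := proj2 (andP (example_fixation_bounds S r_gt1)).
have h_setT : example_fixation r [set: 'I_3] = 1 by rewrite /example_fixation !inE.
have h_set0 : example_fixation r finset.set0 = 0 by rewrite /example_fixation !inE.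
have contr S := example_transient_contract S r_gt1.
exact: (fixation_by_cvg r_ge0 w_ge0 h_harm h_ge0 h_le1 h_setT h_set0
          (example_rate_ge0 r_gt1) (example_rate_lt1 r_gt1) contr).
Qed.
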